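(* Let $(\mathbf F,\mathbf A)$ be an enriched cut-free Gentzen $ru$-frame or enriched cut-free Gentzen $ruz$-frame, with $\mathbf F=(G,T,N,K)$ (resp. $(G,T,N,K,\epsilon)$). Then for each of the following pairs, $(\mathbf F,\mathbf A)$ satisfies the rule if and only if the equation holds in $\mathbf F^+$: $[e]$ and $(\mathsf e)$; $[c]$ and $(\mathsf c)$; $[i]$ and $(\mathsf i)$; $[kc]$ and $(!\mathsf c)$; $[ke]$ and $(!\mathsf e)$; $[ki]$ and $(!\mathsf i)$; $[ka1]$ and $(!\mathsf a1)$; $[ka2]$ and $(!\mathsf a2)$.
   Context: Enriched $ru$-frame: $\mathbf F=(G,T,N,K)$ with $(G,\cdot,\varepsilon)$ a unital groupoid (not necessarily associative), $T$ a set, $N\subseteq G\times T$ nuclear (for all $x,y\in G,z\in T$ there are $x\backslash\!\!\backslash z, z/\!\!/y\in T$ with $x\cdot y\,N\,z\iff y\,N\,x\backslash\!\!\backslash z\iff x\,N\,z/\!\!/y$), $K$ a sub-unital-groupoid of $G$ (contains $\varepsilon$, closed under $\cdot$); an enriched $ruz$-frame additionally has $\epsilon\in T$. $X^{\rhd}=\{t\in T\mid\forall x\in X\,xNt\}$, $Y^{\lhd}=\{g\in G\mid\forall y\in Y\,gNy\}$, $\gamma_N(X)=X^{\rhd\lhd}$. $\mathbf F^+$: universe the closed sets ($\gamma_N(X)=X$), $X\wedge Y=X\cap Y$, $X\vee Y=\gamma_N(X\cup Y)$, $X\cdot Y=\gamma_N(X\circ Y)$ with $X\circ Y=\{x\cdot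 y\mid x\in X,y\in Y\}$, $X\backslash Y=\{z\mid X\circ\{z\}\subseteq Y\}$, $Y/X=\{z\mid \{z\}\circ X\subseteq Y\}$, $!X=\gamma_N(X\cap K)$, unit $\gamma_N(\{\varepsilon\})$, and in the $ruz$ case zero $\{\epsilon\}^{\lhd}$. Enriched cut-free Gentzen $ru$-frame: a pair $(\mathbf F,\mathbf A)$ with $\mathbf F$ an enriched $ru$-frame and $\mathbf A$ a partial algebra in $\{\wedge,\vee,\cdot,\backslash,/,!,1\}$, together with injections of $A$ into $G$ and into $T$ and of $A^!=\{!^{\mathbf A}a\mid a\in\operatorname{dom}!^{\mathbf A}\}$ into $K$ (elements of $A$ are identified with their images), such that for all $x,y\in G$, $z\in T$, $a,a_1,a_2,b\in A$, $k\in K$ (whenever the displayed operations of $\mathbf A$ are defined): $\varepsilon\,N\,1^{\mathbf A}$; $a\,N\,a$; $\varepsilon Nz\Rightarrow 1^{\mathbf A}Nz$; $a\cdot b\,N\,z\Rightarrow a\cdot^{\mathbf A}b\,N\,z$; $xNa,\,yNb\Rightarrow x\cdot y\,N\,a\cdot^{\mathbf A}b$; $xNa,\,bNz\Rightarrow x\cdot(a\backslash^{\mathbf A}b)\,N\,z$; $a\cdot x\,N\,b\Rightarrow x\,N\,a\backslash^{\mathbf A}b$; $xNa,\,bNz\Rightarrow (b/^{\mathbf A}a)\cdot x\,N\,z$; $x\cdot a\,N\,b\Rightarrow x\,N\,b/^{\mathbf A}a$; $a_iNz\Rightarrow a_1\wedge^{\mathbf A}a_2\,N\,z$; $xNa,\,xNb\Rightarrow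 x\,N\,a\wedge^{\mathbf A}b$; $aNz,\,bNz\Rightarrow a\vee^{\mathbf A}b\,N\,z$; $xNa_i\Rightarrow x\,N\,a_1\vee^{\mathbf A}a_2$; $aNz\Rightarrow !^{\mathbf A}a\,N\,z$; $kNa\Rightarrow k\,N\,!^{\mathbf A}a$. An enriched cut-free Gentzen $ruz$-frame uses an enriched $ruz$-frame, $\mathbf A$ a partial algebra additionally with $0$, and also requires $0^{\mathbf A}N\epsilon$ and $xN\epsilon\Rightarrow xN0^{\mathbf A}$. Rules (for all $x,y\in G$, $z\in T$, $k\in K$): $[e]$ $x\cdot y\,N\,z\Rightarrow y\cdot x\,N\,z$; $[c]$ $x\cdot x\,N\,z\Rightarrow xNz$; $[i]$ $\varepsilon Nz\Rightarrow xNz$; $[kc]$ $k\cdot k\,N\,z\Rightarrow kNz$; $[ki]$ $\varepsilon Nz\Rightarrow kNz$; $[ke]$ $k\cdot y\,N\,z\iff y\cdot k\,N\,z$; $[ka1]$ $k\cdot(x\cdot y)\,N\,z\iff (k\cdot x)\cdot y\,N\,z$; $[ka2]$ $x\cdot(y\cdot k)\,N\,z\iff (x\cdot y)\cdot k\,N\,z$. Equations: $(\mathsf e)$ $x\cdot y\le y\cdot x$; $(\mathsf c)$ $x\le x\cdot x$; $(\mathsf i)$ $x\le 1$; $(!\mathsf i)$ $!x\le 1$; $(!\mathsf c)$ $!x\le !x\cdot !x$; $(!\mathsf e)$ $!x\cdot y=y\cdot !x$; $(!\mathsf a1)$ $!x\cdot(y\cdot z)=(!x\cdot y)\cdot z$;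 $(!\mathsf a2)$ $x\cdot(y\cdot !z)=(x\cdot y)\cdot !z$ (in $\mathbf F^+$, $\le$ is $\subseteq$). *)

Record ruFrame := {
  G : Type;
  T : Type;
  op : G -> G -> G;
  eps : G;
  N : G -> T -> Prop;
  K : G -> Prop;
  (* (G, op, eps) is a unital groupoid (not necessarily associative) *)
  op_unit_l : forall x, op eps x = x;
  op_unit_r : forall x, op x eps = x;
  ldivT : G -> T -> T;
  rdivT : T -> G -> T;
  nuclear_l : forall x y z, N (op x y) z <-> N y (ldivT x z);
  nuclear_r : forall x y z, N (op x y) z <-> N x (rdivT z y);
  K_eps : K eps;
  K_op : forall x y, K x -> K y -> K (op x y)
}.

Arguments op {_} _ _.
Arguments eps {_}.
Arguments N {_} _ _.
Arguments K {_} _.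

(* Enriched cut-free Gentzen ru-frame over F: a partial algebra A (partial
   operations as option-valued functions; constant 1 possibly undefined),
   injections of A into G and T, A^! mapped into K, and the listed conditions. *)
Record gentzenRU (F : ruFrame) := {
  A : Type;
  meetA : A -> A -> option A;
  joinA : A -> A -> option A;
  mulA  : A -> A -> option A;
  ldivA : A -> A -> option A;   (* ldivA a b = a \ b *)
  rdivA : A -> A -> option A;   (* rdivA b a = b / a *)
  bangA : A -> option A;
  oneA  : option A;
  inG : A -> G F;
  inT : A -> T F;
  inG_inj : forall a b, inG a = inG b -> a = b;
  inT_inj : forall a b, inT a = inT b -> a = b;
  bang_K : forall a c, bangA a = Some c -> K (inG c);
  g_one1 : forall u, oneA = Some u -> N eps (inT u);
  g_id : forall a, N (inG a) (inT a);
  g_one2 : forall u z, oneA = Some u -> N eps z -> N (inG u) z;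
  g_mulL : forall a b c z, mulA a b = Some c ->
      N (op (inG a) (inG b)) z -> N (inG c) z;
  g_mulR : forall a b c x y, mulA a b = Some c ->
      N x (inT a) -> N y (inT b) -> N (op x y) (inT c);
  g_ldivL : forall a b c x z, ldivA a b = Some c ->
      N x (inT a) -> N (inG b) z -> N (op x (inG c)) z;
  g_ldivR : forall a b c x, ldivA a b = Some c ->
      N (op (inG a) x) (inT b) -> N x (inT c);
  g_rdivL : forall a b c x z, rdivA b a = Some c ->
      N x (inT a) -> N (inG b) z -> N (op (inG c) x) z;
  g_rdivR : forall a b c x, rdivA b a = Some c ->
      N (op x (inG a)) (inT b) -> N x (inT c);
  g_meetL : forall a1 a2 c z, meetA a1 a2 = Some c ->
      (N (inG a1) z \/ N (inG a2) z) -> N (inG c) z;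
  g_meetR : forall a b c x, meetA a b = Some c ->
      N x (inT a) -> N x (inT b) -> N x (inT c);
  g_joinL : forall a b c z, joinA a b = Some c ->
      N (inG a) z -> N (inG b) z -> N (inG c) z;
  g_joinR : forall a1 a2 c x, joinA a1 a2 = Some c ->
      (N x (inT a1) \/ N x (inT a2)) -> N x (inT c);
  g_bangL : forall a c z, bangA a = Some c -> N (inG a) z -> N (inG c) z;
  g_bangR : forall a c k, bangA a = Some c -> K k -> N k (inT a) -> N k (inT c)
}.

(* Enriched cut-free Gentzen ruz-frame: an enriched ruz-frame is an ru-frame F
   together with epsT : T F; the partial algebra additionally has 0. *)
Record gentzenRUZ (F : ruFrame) (epsT : T F) := {
  gru : gentzenRU F;
  zeroA : option (A F gru);
  g_zero1 : forall u, zeroA = Some u -> N (inG F gru u) epsT;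
  g_zero2 : forall u x, zeroA = Some u -> N x epsT -> N x (inT F gru u)
}.

Section Plus.
Variable F : ruFrame.

Definition setG := G F -> Prop.
Definition subsetG (X Y : setG) : Prop := forall g, X g -> Y g.
Definition seteqG (X Y : setG) : Prop := forall g, X g <-> Y g.

Definition rhd (X : setG) : T F -> Prop := fun t => forall x, X x -> N x t.
Definition lhd (Y : T F -> Prop) : setG := fun g => forall t, Y t -> N g t.
Definition gammaN (X : setG) : setG := lhd (rhd X).
Definition closed (X : setG) : Prop := seteqG (gammaN X) X.

Definition circ (X Y : setG) : setG :=
  fun g => exists x y, X x /\ Y y /\ g = op x y.
Definition prodP (X Y : setG) : setG := gammaN (circ X Y).
Definition bangP (X : setG) : setG := gammaN (fun g => X g /\ K g).
Definition oneP : setG := gammaN (fun g => g = @eps F).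

Definition rule_e := forall (x y : G F) (z : T F), N (op x y) z -> N (op y x) z.
Definition rule_c := forall (x : G F) (z : T F), N (op x x) z -> N x z.
Definition rule_i := forall (x : G F) (z : T F), N eps z -> N x z.
Definition rule_kc := forall (k : G F) (z : T F), K k -> N (op k k) z -> N k z.
Definition rule_ki := forall (k : G F) (z : T F), K k -> N eps z -> N k z.
Definition rule_ke := forall (k y : G F) (z : T F), K k -> (N (op k y) z <-> N (op y k) z).
Definition rule_ka1 := forall (k x y : G F) (z : T F), K k ->
  (N (op k (op x y)) z <-> N (op (op k x) y) z).
Definition rule_ka2 := forall (k x y : G F) (z : T F), K k ->
  (N (op x (op y k)) z <-> N (op (op x y) k) z).

(* Equations holding in F^+ (variables range over closed sets; <= is inclusion) *)
Definition eq_e := forall X Y, closed X -> closed Y ->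
  subsetG (prodP X Y) (prodP Y X).
Definition eq_c := forall X, closed X -> subsetG X (prodP X X).
Definition eq_i := forall X, closed X -> subsetG X oneP.
Definition eq_bi := forall X, closed X -> subsetG (bangP X) oneP.
Definition eq_bc := forall X, closed X ->
  subsetG (bangP X) (prodP (bangP X) (bangP X)).
Definition eq_be := forall X Y, closed X -> closed Y ->
  seteqG (prodP (bangP X) Y) (prodP Y (bangP X)).
Definition eq_ba1 := forall X Y Z, closed X -> closed Y -> closed Z ->
  seteqG (prodP (bangP X) (prodP Y Z)) (prodP (prodP (bangP X) Y) Z).
Definition eq_ba2 := forall X Y Z, closed X -> closed Y -> closed Z ->
  seteqG (prodP X (prodP Y (bangP Z))) (prodP (prodP X Y) (bangP Z)).

Definition correspondences : Prop :=
  (rule_e <-> eq_e) /\ (rule_c <-> eq_c) /\ (rule_i <-> eq_i) /\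
  (rule_kc <-> eq_bc) /\ (rule_ke <-> eq_be) /\ (rule_ki <-> eq_bi) /\
  (rule_ka1 <-> eq_ba1) /\ (rule_ka2 <-> eq_ba2).

End Plus.


(* Each rule is a first-order condition on N, and each equation is the same
   condition lifted to Galois-closed sets: closed sets are intersections of
   sets of the form {g | N g t}, and nuclearity lets the products [prodP] be
   tested elementwise, so a rule implies its equation.  Conversely, testing an
   equation on the principal closed sets gamma({x}) recovers the rule, because
   products and [!] of principal sets stay below the principal set of the
   corresponding element of G. *)

Section Correspondences.
Variable F : ruFrame.

Definition principal (x : G F) : setG F := gammaN F (fun g => g = x).

Lemma subsetG_refl (X : setG F) : subsetG F X X.
Proof. intros g Hg. exact Hg. Qed.

Lemma subsetG_gammaN (S S' : setG F) :
  (forall t, rhd F S' t -> rhd F S t) -> subsetG F (gammaN F S) (gammaN F S').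
Proof. intros H g Hg t Ht. apply Hg, H, Ht. Qed.

Lemma seteqG_subsetG (X Y : setG F) :
  subsetG F X Y -> subsetG F Y X -> seteqG F X Y.
Proof. intros HXY HYX g. split; [apply HXY | apply HYX]. Qed.

Lemma rhd_circ (X Y : setG F) t :
  rhd F (circ F X Y) t <-> (forall x y, X x -> Y y -> N (op x y) t).
Proof.
  split.
  - intros Ht x y Hx Hy. apply Ht. exists x, y. auto.
  - intros H w [x [y [Hx [Hy ->]]]]. auto.
Qed.

Lemma gammaN_ext (S : setG F) g : S g -> gammaN F S g.
Proof. intros Hg t Ht. apply Ht, Hg. Qed.

Lemma prodP_intro (X Y : setG F) x y : X x -> Y y -> prodP F X Y (op x y).
Proof. intros Hx Hy. apply gammaN_ext. exists x, y. auto. Qed.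

Lemma bangP_intro (X : setG F) k : X k -> K k -> bangP F X k.
Proof. intros Hk HK. apply gammaN_ext. auto. Qed.

Lemma N_op_gammaN_l (S : setG F) x y t :
  gammaN F S x -> (forall s, S s -> N (op s y) t) -> N (op x y) t.
Proof.
  intros Hx H. apply (nuclear_r F). apply Hx.
  intros s Hs. apply (nuclear_r F), H, Hs.
Qed.

Lemma N_op_gammaN_r (S : setG F) x y t :
  gammaN F S y -> (forall s, S s -> N (op x s) t) -> N (op x y) t.
Proof.
  intros Hy H. apply (nuclear_l F). apply Hy.
  intros s Hs. apply (nuclear_l F), H, Hs.
Qed.

Lemma principal_refl x : principal x x.
Proof. apply gammaN_ext. reflexivity. Qed.

Lemma principal_N x g t : principal x g -> N x t -> N g t.
Proof. intros Hg Ht. apply Hg. intros s ->. exact Ht. Qed.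

Lemma prodP_sub_principal (X Y : setG F) x y :
  subsetG F X (principal x) -> subsetG F Y (principal y) ->
  subsetG F (prodP F X Y) (principal (op x y)).
Proof.
  intros HX HY. apply subsetG_gammaN. intros t Ht.
  apply rhd_circ. intros x' y' Hx Hy.
  apply (N_op_gammaN_l _ _ _ _ (HX _ Hx)). intros s ->.
  apply (N_op_gammaN_r _ _ _ _ (HY _ Hy)). intros s' ->.
  apply Ht. reflexivity.
Qed.

Lemma bangP_sub (X : setG F) : closed F X -> subsetG F (bangP F X) X.
Proof.
  intros HX g Hg. apply HX. revert g Hg. apply subsetG_gammaN.
  intros t Ht s [Hs _]. apply Ht, Hs.
Qed.

Lemma closed_principal x : closed F (principal x).
Proof.
  intros g. split; [|apply gammaN_ext].
  apply subsetG_gammaN. intros t Ht s Hs. apply Hs, Ht.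
Qed.

Lemma bangP_principal k : K k -> bangP F (principal k) k.
Proof. intros HK. apply bangP_intro; [apply principal_refl | exact HK]. Qed.

Lemma bangP_principal_sub k : subsetG F (bangP F (principal k)) (principal k).
Proof. apply bangP_sub, closed_principal. Qed.

Lemma rule_e_iff_eq_e : rule_e F <-> eq_e F.
Proof.
  split.
  - intros He X Y _ _. apply subsetG_gammaN. intros t Ht.
    apply rhd_circ. intros x y Hx Hy.
    apply He, (proj1 (rhd_circ _ _ t) Ht); assumption.
  - intros He x y z H.
    apply (principal_N (op x y)); [|exact H].
    apply (prodP_sub_principal _ _ _ _ (subsetG_refl _) (subsetG_refl _)).
    apply He; try apply closed_principal.
    apply prodP_intro; apply principal_refl.
Qed.

Lemma rule_c_iff_eq_c : rule_c F <-> eq_c F.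
Proof.
  split.
  - intros Hc X _ x Hx t Ht. apply Hc, Ht. exists x, x. auto.
  - intros Hc x z H.
    apply (principal_N (op x x)); [|exact H].
    apply (prodP_sub_principal _ _ _ _ (subsetG_refl _) (subsetG_refl _)).
    apply Hc; [apply closed_principal | apply principal_refl].
Qed.

Lemma rule_i_iff_eq_i : rule_i F <-> eq_i F.
Proof.
  split.
  - intros Hi X _ x Hx t Ht. apply Hi, Ht. reflexivity.
  - intros Hi x z H.
    apply (principal_N eps); [|exact H].
    apply (Hi (principal x)); [apply closed_principal | apply principal_refl].
Qed.

Lemma rule_kc_iff_eq_bc : rule_kc F <-> eq_bc F.
Proof.
  split.
  - intros Hkc X _. apply subsetG_gammaN. intros t Ht k [Hk HK].
    apply Hkc; [exact HK|].
    apply (proj1 (rhd_circ _ _ t) Ht); apply bangP_intro; assumption.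
  - intros Hkc k z HK H.
    apply (principal_N (op k k)); [|exact H].
    apply (prodP_sub_principal _ _ _ _ (bangP_principal_sub k) (bangP_principal_sub k)).
    apply Hkc; [apply closed_principal | apply bangP_principal, HK].
Qed.

Lemma rule_ke_iff_eq_be : rule_ke F <-> eq_be F.
Proof.
  split.
  - intros Hke X Y _ _. apply seteqG_subsetG;
      apply subsetG_gammaN; intros t Ht; apply rhd_circ.
    + intros b y Hb Hy. apply (N_op_gammaN_l _ _ _ _ Hb).
      intros k [Hk HK]. apply (Hke k y t HK).
      apply (proj1 (rhd_circ _ _ t) Ht); [exact Hy | apply bangP_intro; assumption].
    + intros y b Hy Hb. apply (N_op_gammaN_r _ _ _ _ Hb).
      intros k [Hk HK]. apply (Hke k y t HK).
      apply (proj1 (rhd_circ _ _ t) Ht); [apply bangP_intro; assumption | exact Hy].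
  - intros Hke k y z HK. split; intros H.
    + apply (principal_N (op k y)); [|exact H].
      apply (prodP_sub_principal _ _ _ _ (bangP_principal_sub k) (subsetG_refl _)).
      apply Hke; try apply closed_principal.
      apply prodP_intro; [apply principal_refl | apply bangP_principal, HK].
    + apply (principal_N (op y k)); [|exact H].
      apply (prodP_sub_principal _ _ _ _ (subsetG_refl _) (bangP_principal_sub k)).
      apply Hke; try apply closed_principal.
      apply prodP_intro; [apply bangP_principal, HK | apply principal_refl].
Qed.

Lemma rule_ki_iff_eq_bi : rule_ki F <-> eq_bi F.
Proof.
  split.
  - intros Hki X _. apply subsetG_gammaN. intros t Ht k [_ HK].
    apply Hki; [exact HK | apply Ht; reflexivity].
  - intros Hki k z HK H.
    apply (principal_N eps); [|exact H].
    apply (Hki (principal k)); [apply closed_principal | apply bangP_principal, HK].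
Qed.

Lemma rule_ka1_iff_eq_ba1 : rule_ka1 F <-> eq_ba1 F.
Proof.
  split.
  - intros Hka X Y Z _ _ _. apply seteqG_subsetG;
      apply subsetG_gammaN; intros t Ht; apply rhd_circ.
    + intros b v Hb Hv. apply (N_op_gammaN_l _ _ _ _ Hb).
      intros k [Hk HK]. apply (N_op_gammaN_r _ _ _ _ Hv).
      intros w [y [z [Hy [Hz ->]]]]. apply (Hka k y z t HK).
      apply (proj1 (rhd_circ _ _ t) Ht); [|exact Hz].
      apply prodP_intro; [apply bangP_intro|]; assumption.
    + intros u z Hu Hz. apply (N_op_gammaN_l _ _ _ _ Hu).
      intros w [b [y [Hb [Hy ->]]]].
      apply (nuclear_r F _ z). apply (N_op_gammaN_l _ _ _ _ Hb).
      intros k [Hk HK]. apply (nuclear_r F _ z). apply (Hka k y z t HK).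
      apply (proj1 (rhd_circ _ _ t) Ht); [apply bangP_intro; assumption|].
      apply prodP_intro; assumption.
  - intros Hka k x y z HK. split; intros H.
    + apply (principal_N (op k (op x y))); [|exact H].
      apply (prodP_sub_principal _ _ _ _ (bangP_principal_sub k)
               (prodP_sub_principal _ _ _ _ (subsetG_refl _) (subsetG_refl _))).
      apply Hka; try apply closed_principal.
      apply prodP_intro; [|apply principal_refl].
      apply prodP_intro; [apply bangP_principal, HK | apply principal_refl].
    + apply (principal_N (op (op k x) y)); [|exact H].
      apply (prodP_sub_principal _ _ _ _
               (prodP_sub_principal _ _ _ _ (bangP_principal_sub k) (subsetG_refl _))
               (subsetG_refl _)).
      apply Hka; try apply closed_principal.
      apply prodP_intro; [apply bangP_principal, HK|].
      apply prodP_intro; apply principal_refl.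
Qed.

Lemma rule_ka2_iff_eq_ba2 : rule_ka2 F <-> eq_ba2 F.
Proof.
  split.
  - intros Hka X Y Z _ _ _. apply seteqG_subsetG;
      apply subsetG_gammaN; intros t Ht; apply rhd_circ.
    + intros x v Hx Hv. apply (N_op_gammaN_r _ _ _ _ Hv).
      intros w [y [b [Hy [Hb ->]]]].
      apply (nuclear_l F x). apply (N_op_gammaN_r _ _ _ _ Hb).
      intros k [Hk HK]. apply (nuclear_l F x). apply (Hka k x y t HK).
      apply (proj1 (rhd_circ _ _ t) Ht); [|apply bangP_intro; assumption].
      apply prodP_intro; assumption.
    + intros u b Hu Hb. apply (N_op_gammaN_r _ _ _ _ Hb).
      intros k [Hk HK]. apply (N_op_gammaN_l _ _ _ _ Hu).
      intros w [x [y [Hx [Hy ->]]]]. apply (Hka k x y t HK).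
      apply (proj1 (rhd_circ _ _ t) Ht); [exact Hx|].
      apply prodP_intro; [|apply bangP_intro]; assumption.
  - intros Hka k x y z HK. split; intros H.
    + apply (principal_N (op x (op y k))); [|exact H].
      apply (prodP_sub_principal _ _ _ _ (subsetG_refl _)
               (prodP_sub_principal _ _ _ _ (subsetG_refl _) (bangP_principal_sub k))).
      apply Hka; try apply closed_principal.
      apply prodP_intro; [|apply bangP_principal, HK].
      apply prodP_intro; apply principal_refl.
    + apply (principal_N (op (op x y) k)); [|exact H].
      apply (prodP_sub_principal _ _ _ _
               (prodP_sub_principal _ _ _ _ (subsetG_refl _) (subsetG_refl _))
               (bangP_principal_sub k)).
      apply Hka; try apply closed_principal.
      apply prodP_intro; [apply principal_refl|].
      apply prodP_intro; [apply principal_refl | apply bangP_principal, HK].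
Qed.

Lemma correspondences_hold : correspondences F.
Proof.
  exact (conj rule_e_iff_eq_e (conj rule_c_iff_eq_c (conj rule_i_iff_eq_i
    (conj rule_kc_iff_eq_bc (conj rule_ke_iff_eq_be (conj rule_ki_iff_eq_bi
    (conj rule_ka1_iff_eq_ba1 rule_ka2_iff_eq_ba2))))))).
Qed.

End Correspondences.

Theorem mainTheorem10 :
  (forall (F : ruFrame) (GA : gentzenRU F), correspondences F) /\
  (forall (F : ruFrame) (epsT : T F) (GA : gentzenRUZ F epsT), correspondences F).
Proof. split; intros; apply correspondences_hold. Qed.
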